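(* For every set of formulas $\Gamma$ and every formula $\varphi$: if $\Gamma\vdash_{\mathsf{iSLH}}\varphi$, then there is a finite multiset $\Gamma'$ whose elements all belong to $\Gamma$ such that the sequent $\Gamma'\Rightarrow\varphi$ is provable in $\mathsf{G4iSLt}$.
   Context: Formulas are built by the grammar $\varphi ::= p \mid \bot \mid \varphi\land\varphi \mid \varphi\lor\varphi \mid \varphi\to\varphi \mid \Box\varphi$, with $p$ ranging over a countably infinite set of propositional variables. For a multiset $\Gamma$, $\Box\Gamma=\{\Box\psi:\psi\in\Gamma\}$; a boxed formula is one of the form $\Box\psi$. The generalised Hilbert calculus $\mathsf{iSLH}$ derives expressions $\Gamma\vdash\varphi$ ($\Gamma$ a set of formulas) by the rules: (Ax) $\Gamma\vdash\varphi$ whenever $\varphi$ is an instance of an axiom; (El) $\Gamma\vdash\varphi$ whenever $\varphi\in\Gamma$; (Nec) from $\emptyset\vdash\varphi$ infer $\Gamma\vdash\Box\varphi$; (MP) from $\Gamma\vdash\varphi$ and $\Gamma\vdash\varphi\to\psi$ infer $\Gamma\vdash\psi$. The axioms are all instances of: $\varphi\to(\psi\to\varphi)$; $(\varphi\to(\psi\to\chi))\to((\varphi\to\psi)\to(\varphi\to\chi))$; $\varphi\to(\varphi\lor\psi)$; $\psi\to(\varphi\lor\psi)$; $(\varphi\to\chi)\to((\psi\to\chi)\to((\varphi\lor\psi)\to\chi))$; $(\varphi\land\psi)\to\varphi$; $(\varphi\land\psi)\to\psi$; $(\varphi\to\psi)\to((\varphi\to\chi)\to(\varphi\to(\psi\land\chi)))$;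 $\bot\to\varphi$; $\Box(\varphi\to\psi)\to(\Box\varphi\to\Box\psi)$; $(\Box\varphi\to\varphi)\to\varphi$. A sequent is $\Gamma\Rightarrow\chi$ with $\Gamma$ a finite multiset of formulas and $\chi$ a formula. The sequent calculus $\mathsf{G4iSLt}$ has the following rules, where $p$ is a propositional variable and $\Phi$ always denotes a multiset containing no boxed formula: (⊥L) $\bot,\Gamma\Rightarrow\chi$ (no premise); (IdP) $\Gamma,p\Rightarrow p$ (no premise); (∧L) from $\Gamma,\varphi,\psi\Rightarrow\chi$ infer $\Gamma,\varphi\land\psi\Rightarrow\chi$; (∧R) from $\Gamma\Rightarrow\varphi$ and $\Gamma\Rightarrow\psi$ infer $\Gamma\Rightarrow\varphi\land\psi$; (∨L) from $\Gamma,\varphi\Rightarrow\chi$ and $\Gamma,\psi\Rightarrow\chi$ infer $\Gamma,\varphi\lor\psi\Rightarrow\chi$; (∨R$_i$), $i\in\{1,2\}$: from $\Gamma\Rightarrow\varphi_i$ infer $\Gamma\Rightarrow\varphi_1\lor\varphi_2$; (p→L) from $\Gamma,p,\varphi\Rightarrow\chi$ infer $\Gamma,p,p\to\varphi\Rightarrow\chi$; (→R) from $\Gamma,\varphi\Rightarrow\psi$ infer $\Gamma\Rightarrow\varphi\to\psi$; (□→L) from $\Phi,\Gamma,\psi,\Box\varphi\Rightarrow\varphi$ and $\Phi,\Box\Gamma,\psi\Rightarrow\chi$ infer $\Phi,\Box\Gamma,\Box\varphi\to\psi\Rightarrow\chi$; (SLtR) from $\Phi,\Gamma,\Box\varphi\Rightarrow\varphi$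 infer $\Phi,\Box\Gamma\Rightarrow\Box\varphi$; (∧→L) from $\Gamma,\varphi\to(\psi\to\chi)\Rightarrow\delta$ infer $\Gamma,(\varphi\land\psi)\to\chi\Rightarrow\delta$; (∨→L) from $\Gamma,\varphi\to\chi,\psi\to\chi\Rightarrow\delta$ infer $\Gamma,(\varphi\lor\psi)\to\chi\Rightarrow\delta$; (→→L) from $\Gamma,\psi\to\chi\Rightarrow\varphi\to\psi$ and $\Gamma,\chi\Rightarrow\delta$ infer $\Gamma,(\varphi\to\psi)\to\chi\Rightarrow\delta$. A proof of a sequent $S$ is a finite tree of sequents with root $S$ in which each interior node together with its children forms an instance of a rule (conclusion, premises) and each leaf is the conclusion of a premise-free rule; $S$ is provable if it has a proof. *)

(* Multisets are lists taken up to permutation. *)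
From Stdlib Require Import List Permutation.
Import ListNotations.

Inductive form : Type :=
| Var : nat -> form
| Bot : form
| And : form -> form -> form
| Or : form -> form -> form
| Imp : form -> form -> form
| Box : form -> form.

Inductive Axiom_iSL : form -> Prop :=
| A1 : forall a b, Axiom_iSL (Imp a (Imp b a))
| A2 : forall a b c, Axiom_iSL (Imp (Imp a (Imp b c)) (Imp (Imp a b) (Imp a c)))
| A3 : forall a b, Axiom_iSL (Imp a (Or a b))
| A4 : forall a b, Axiom_iSL (Imp b (Or a b))
| A5 : forall a b c, Axiom_iSL (Imp (Imp a c) (Imp (Imp b c) (Imp (Or a b) c)))
| A6 : forall a b, Axiom_iSL (Imp (And a b) a)
| A7 : forall a b, Axiom_iSL (Imp (And a b) b)
| A8 : forall a b c, Axiom_iSL (Imp (Imp a b) (Imp (Imp a c) (Imp a (And b c))))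
| A9 : forall a, Axiom_iSL (Imp Bot a)
| AK : forall a b, Axiom_iSL (Imp (Box (Imp a b)) (Imp (Box a) (Box b)))
| ASL : forall a, Axiom_iSL (Imp (Imp (Box a) a) a).

Inductive iSLH : (form -> Prop) -> form -> Prop :=
| H_Ax : forall G a, Axiom_iSL a -> iSLH G a
| H_El : forall (G : form -> Prop) a, G a -> iSLH G a
| H_Nec : forall G a, iSLH (fun _ => False) a -> iSLH G (Box a)
| H_MP : forall G a b, iSLH G a -> iSLH G (Imp a b) -> iSLH G b.

Definition is_box (a : form) : Prop := match a with Box _ => True | _ => False end.

Definition box_free (Phi : list form) : Prop := forall a, In a Phi -> ~ is_box a.

(* G4iSLt; the context of a conclusion is any list permutation-equivalent
   (i.e. equal as multiset) to the displayed one. *)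
Inductive G4iSLt : list form -> form -> Prop :=
| BotL : forall D G c, Permutation D (Bot :: G) -> G4iSLt D c
| IdP : forall D G p, Permutation D (Var p :: G) -> G4iSLt D (Var p)
| AndL : forall D G a b c,
    G4iSLt (a :: b :: G) c -> Permutation D (And a b :: G) -> G4iSLt D c
| AndR : forall G a b, G4iSLt G a -> G4iSLt G b -> G4iSLt G (And a b)
| OrL : forall D G a b c,
    G4iSLt (a :: G) c -> G4iSLt (b :: G) c -> Permutation D (Or a b :: G) ->
    G4iSLt D c
| OrR1 : forall G a b, G4iSLt G a -> G4iSLt G (Or a b)
| OrR2 : forall G a b, G4iSLt G b -> G4iSLt G (Or a b)
| PImpL : forall D G p a c,
    G4iSLt (Var p :: a :: G) c -> Permutation D (Var p :: Imp (Var p) a :: G) ->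
    G4iSLt D c
| ImpR : forall G a b, G4iSLt (a :: G) b -> G4iSLt G (Imp a b)
| BoxImpL : forall D Phi G a b c,
    box_free Phi ->
    G4iSLt (Phi ++ G ++ [b; Box a]) a ->
    G4iSLt (Phi ++ map Box G ++ [b]) c ->
    Permutation D (Phi ++ map Box G ++ [Imp (Box a) b]) ->
    G4iSLt D c
| SLtR : forall D Phi G a,
    box_free Phi ->
    G4iSLt (Phi ++ G ++ [Box a]) a ->
    Permutation D (Phi ++ map Box G) ->
    G4iSLt D (Box a)
| AndImpL : forall D G a b c d,
    G4iSLt (Imp a (Imp b c) :: G) d -> Permutation D (Imp (And a b) c :: G) ->
    G4iSLt D d
| OrImpL : forall D G a b c d,
    G4iSLt (Imp a c :: Imp b c :: G) d -> Permutation D (Imp (Or a b) c :: G) ->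
    G4iSLt D d
| ImpImpL : forall D G a b c d,
    G4iSLt (Imp b c :: G) (Imp a b) -> G4iSLt (c :: G) d ->
    Permutation D (Imp (Imp a b) c :: G) -> G4iSLt D d.

(* The proof is semantic and classical.  We work with intuitionistic Kripke
   models carrying a second relation R with R ⊆ ≤, ≤;R ⊆ R and R conversely
   well-founded (no infinite R-chains upwards).
   1. iSLH is sound for these models: every axiom is valid (the Löb-style
      axiom (□φ→φ)→φ by well-founded induction along R) and the rules
      preserve forcing.
   2. An iSLH derivation from Γ only uses finitely many members of Γ.
   3. Every sequent not provable in G4iSLt has a countermodel.  This is proved
      by induction on a weight of sequents that decreases from conclusion to
      premise in every rule.  If an invertible rule applies, a countermodel of
      an unprovable premise is one of the conclusion.  Otherwise the sequent is
      "saturated"; we take countermodels of the relevant premises of the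
      non-invertible rules (→→L, □→L, ∨R, SLtR) and glue them below a fresh
      root, which then refutes the sequent.
   The theorem follows: take the finite Γ' from 2; if Γ' ⇒ φ were not
   provable, its countermodel from 3 would contradict soundness 1. *)
From Stdlib Require Import List Permutation Lia Classical.
Import ListNotations.

(* Kripke models for iSL.  Worlds are lists of naturals so that models can be
   glued below a fresh root (the empty list) without changing the world type. *)
Record kmodel := {
  kle : list nat -> list nat -> Prop;
  kR : list nat -> list nat -> Prop;
  kval : list nat -> nat -> Prop;
  kle_refl : forall w, kle w w;
  kle_trans : forall u v w, kle u v -> kle v w -> kle u w;
  kR_le : forall w v, kR w v -> kle w v;
  kle_R : forall w u v, kle w u -> kR u v -> kR w v;
  kR_wf : forall w, Acc (fun v u => kR u v) w;
  kval_mono : forall w v p, kle w v -> kval w p -> kval v p }.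

Fixpoint forces (M : kmodel) (w : list nat) (f : form) : Prop :=
  match f with
  | Var p => kval M w p
  | Bot => False
  | And a b => forces M w a /\ forces M w b
  | Or a b => forces M w a \/ forces M w b
  | Imp a b => forall v, kle M w v -> forces M v a -> forces M v b
  | Box a => forall v, kR M w v -> forces M v a
  end.

Lemma forces_mono M f : forall w v, kle M w v -> forces M w f -> forces M v f.
Proof.
  induction f; simpl; intros w v Hle H.
  - eapply kval_mono; eauto.
  - exact H.
  - destruct H; split; eauto.
  - destruct H; [left | right]; eauto.
  - intros u Hu. apply H. eapply kle_trans; eauto.
  - intros u Hu. apply H. eapply kle_R; eauto.
Qed.

(* The semantic content of the axiom (□a→a)→a: induction along converse R. *)
Lemma forces_loeb M a w : forces M w (Imp (Imp (Box a) a) a).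
Proof.
  intros u _. induction (kR_wf M u) as [u _ IH]. intros H.
  apply (H u (kle_refl _ _)). intros v Ruv. apply IH; auto.
  eapply forces_mono; [apply kR_le; eauto | exact H].
Qed.

Lemma axiom_valid M w a : Axiom_iSL a -> forces M w a.
Proof.
  intros Hax; destruct Hax; simpl.
  - intros v1 _ Ha v2 H12 _. eapply forces_mono; eauto.
  - intros v1 _ H v2 H12 H' v3 H23 Ha.
    apply (H v3 (kle_trans _ _ _ _ H12 H23) Ha v3 (kle_refl _ _) (H' v3 H23 Ha)).
  - intros v _ H; left; auto.
  - intros v _ H; right; auto.
  - intros v1 _ H1 v2 H12 H2 v3 H23 [Ha | Hb].
    + apply (H1 v3 (kle_trans _ _ _ _ H12 H23) Ha).
    + apply (H2 v3 H23 Hb).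
  - intros v _ [H _]; auto.
  - intros v _ [_ H]; auto.
  - intros v1 _ H1 v2 H12 H2 v3 H23 Ha. split.
    + apply (H1 v3 (kle_trans _ _ _ _ H12 H23) Ha).
    + apply (H2 v3 H23 Ha).
  - intros v _ [].
  - intros v1 _ H1 v2 H12 H2 v3 R23.
    apply (H1 v3 (kle_R _ _ _ _ H12 R23) v3 (kle_refl _ _) (H2 v3 R23)).
  - apply forces_loeb.
Qed.

(* Soundness of iSLH: a world forcing all hypotheses forces the conclusion.
   Necessitation is sound because its premise has no hypotheses. *)
Lemma iSLH_sound G a :
  iSLH G a -> forall M w, (forall b, G b -> forces M w b) -> forces M w a.
Proof.
  induction 1 as [G a Hax | G a Hg | G a Ha IH | G a b Ha IHa Hb IHb]; intros M w HG.
  - apply axiom_valid; auto.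
  - auto.
  - simpl. intros v _. apply IH. intros b [].
  - apply (IHb M w HG w (kle_refl _ _) (IHa M w HG)).
Qed.

Lemma iSLH_mono G a :
  iSLH G a -> forall G', (forall x, G x -> G' x) -> iSLH G' a.
Proof.
  induction 1 as [G a Hax | G a Hg | G a Ha IH | G a b Ha IHa Hb IHb]; intros G' HG.
  - apply H_Ax; auto.
  - apply H_El; auto.
  - apply H_Nec; auto.
  - eapply H_MP; eauto.
Qed.

Lemma iSLH_compact G a :
  iSLH G a -> exists L, (forall b, In b L -> G b) /\ iSLH (fun x => In x L) a.
Proof.
  induction 1 as [G a Hax | G a Hg | G a Ha IH | G a b Ha IHa Hb IHb].
  - exists []; split; [intros _ [] | apply H_Ax; auto].
  - exists [a]; split; [intros b [<- | []]; auto | apply H_El; simpl; auto].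
  - exists []; split; [intros _ [] | apply H_Nec; auto].
  - destruct IHa as [L1 [H1 P1]], IHb as [L2 [H2 P2]].
    exists (L1 ++ L2); split.
    + intros x Hx; apply in_app_or in Hx; destruct Hx; auto.
    + apply H_MP with a; eapply iSLH_mono; eauto; intros; apply in_or_app; auto.
Qed.

(* A weight on formulas making every G4iSLt rule decrease the measure below;
   the multiplicative shape handles the rules that duplicate subformulas. *)
Fixpoint weight (f : form) : nat :=
  match f with
  | Var _ | Bot => 3
  | And a b => 9 * weight a * weight b
  | Or a b | Imp a b => 3 * weight a * weight b
  | Box a => 3 * weight a
  end.

Lemma weight_ge3 f : 3 <= weight f.
Proof. induction f; simpl; nia. Qed.

Fixpoint ctx_weight (l : list form) : nat :=
  match l with [] => 0 | f :: l => weight f + ctx_weight l end.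

Lemma ctx_weight_app l m : ctx_weight (l ++ m) = ctx_weight l + ctx_weight m.
Proof. induction l; simpl; lia. Qed.

Lemma ctx_weight_perm l m : Permutation l m -> ctx_weight l = ctx_weight m.
Proof. induction 1; simpl; lia. Qed.

Lemma ctx_weight_unbox G : ctx_weight G <= ctx_weight (map Box G).
Proof. induction G; simpl; lia. Qed.

(* The goal counts twice, so that →R, moving a from the goal a → b into the
   context, decreases the measure. *)
Definition measure (l : list form) (c : form) : nat := ctx_weight l + 2 * weight c.

Lemma in_perm (x : form) l : In x l -> exists l', Permutation l (x :: l').
Proof.
  intros H; destruct (in_split _ _ H) as [l1 [l2 ->]]; exists (l1 ++ l2).
  apply Permutation_sym, Permutation_middle.
Qed.

Lemma in_perm_cons (x f : form) l l' :
  Permutation l (x :: l') -> In f l -> f = x \/ In f l'.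
Proof. intros HP Hf. apply (Permutation_in _ HP) in Hf. destruct Hf; auto. Qed.

Lemma boxes_split l :
  exists Phi G, box_free Phi /\ Permutation l (Phi ++ map Box G).
Proof.
  induction l as [|f l [Phi [G [Hb Hp]]]].
  - exists [], []; split; [intros a [] | constructor].
  - destruct (classic (is_box f)) as [Hf | Hf].
    + destruct f as [| | | | |a]; try contradiction.
      exists Phi, (a :: G); split; auto.
      eapply perm_trans; [apply perm_skip, Hp | apply Permutation_middle].
    + exists (f :: Phi), G; split; [| constructor; exact Hp].
      intros x [<- | Hx]; [exact Hf | exact (Hb x Hx)].
Qed.

Lemma in_split_unboxed Phi G g :
  box_free Phi -> In g (Phi ++ map Box G) -> ~ is_box g -> In g Phi.
Proof.
  intros Hb H Hn. apply in_app_or in H; destruct H as [H | H]; auto.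
  apply in_map_iff in H. destruct H as [y [<- _]]. simpl in Hn; tauto.
Qed.

Lemma in_split_boxed Phi G g :
  box_free Phi -> In (Box g) (Phi ++ map Box G) -> In g G.
Proof.
  intros Hb H. apply in_app_or in H; destruct H as [H | H].
  - exfalso; apply (Hb _ H); simpl; auto.
  - apply in_map_iff in H. destruct H as [y [Hy Hy']]. injection Hy; intros ->; auto.
Qed.

Definition forces_all (M : kmodel) (w : list nat) (l : list form) : Prop :=
  forall f, In f l -> forces M w f.

Lemma forces_all_perm M w l1 l2 :
  Permutation l1 l2 -> forces_all M w l2 -> forces_all M w l1.
Proof. intros HP H f Hf; apply H; eapply Permutation_in; eauto. Qed.

Lemma forces_all_cons M w f l :
  forces M w f -> forces_all M w l -> forces_all M w (f :: l).
Proof. intros Hf H g [<- | Hg]; auto. Qed.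

Definition Refutable (l : list form) (c : form) : Prop :=
  exists M w, forces_all M w l /\ ~ forces M w c.

Lemma refutable_transfer l' l c :
  Refutable l' c -> (forall M w, forces_all M w l' -> forces_all M w l) ->
  Refutable l c.
Proof. intros [M [w [H1 H2]]] Ht. exists M, w; auto. Qed.

(* A pointed model to be glued below a fresh root; if [sboxed] holds, the new
   root sees the point (and everything above it) via R, otherwise only via ≤
   (and via R exactly what the point sees via R). *)
Record submodel := mkSub { smodel : kmodel; sroot : list nat; sboxed : bool }.

(* The one-world model with empty R, used as a default value only. *)
Definition point_model : kmodel.
Proof.
  refine {| kle := eq; kR := fun _ _ => False; kval := fun _ _ => False |}.
  - auto.
  - intros; subst; auto.
  - intros _ _ [].
  - intros _ _ _ _ [].
  - intros w; constructor; intros y [].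
  - intros _ _ _ _ [].
Defined.

Definition sub (subs : list submodel) (i : nat) : submodel :=
  nth i subs (mkSub point_model [] false).

Lemma in_sub subs x : In x subs -> exists i, i < length subs /\ sub subs i = x.
Proof.
  intros H. destruct (In_nth _ _ (mkSub point_model [] false) H) as [i [Hi Hn]].
  exists i; auto.
Qed.

Definition root_link (b : bool) : kmodel -> list nat -> list nat -> Prop :=
  if b then kle else kR.

Lemma root_link_le b M w v : root_link b M w v -> kle M w v.
Proof. destruct b; simpl; auto using kR_le. Qed.

Lemma root_link_R b M w u v : kle M w u -> kR M u v -> root_link b M w v.
Proof. destruct b; simpl; eauto using kle_R, kR_le, kle_trans. Qed.

Section Gluing.
Variables (l : list form) (subs : list submodel).

(* World [i :: w] is world w of submodel i; [[]] is the new root, which forces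
   exactly the atoms of l that hold at all the glued points. *)
Definition glue_le (w v : list nat) : Prop :=
  match w, v with
  | [], [] => True
  | [], i :: v => i < length subs /\ kle (smodel (sub subs i)) (sroot (sub subs i)) v
  | _ :: _, [] => False
  | i :: w, j :: v => i = j /\ kle (smodel (sub subs i)) w v
  end.

Definition glue_R (w v : list nat) : Prop :=
  match w, v with
  | _, [] => False
  | [], i :: v => i < length subs /\
      root_link (sboxed (sub subs i)) (smodel (sub subs i)) (sroot (sub subs i)) v
  | i :: w, j :: v => i = j /\ kR (smodel (sub subs i)) w v
  end.

Definition glue_val (w : list nat) (p : nat) : Prop :=
  match w with
  | [] => In (Var p) l /\
      forall i, i < length subs -> kval (smodel (sub subs i)) (sroot (sub subs i)) p
  | i :: w => kval (smodel (sub subs i)) w p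
  end.

Lemma glue_R_acc i :
  forall w, Acc (fun v u => kR (smodel (sub subs i)) u v) w ->
  Acc (fun v u => glue_R u v) (i :: w).
Proof.
  induction 1 as [w _ IH]. constructor. intros [|j y] Hy; simpl in Hy; [contradiction |].
  destruct Hy as [<- Hy]. apply IH; auto.
Qed.

Definition glue : kmodel.
Proof.
  refine {| kle := glue_le; kR := glue_R; kval := glue_val |}.
  - intros [|i w]; simpl; auto using kle_refl.
  - intros [|i u] [|j v] [|k w]; simpl; try tauto.
    + intros [Hi H] [<- H']; split; eauto using kle_trans.
    + intros [<- H] [<- H']; split; eauto using kle_trans.
  - intros [|i w] [|j v]; simpl; try tauto.
    + intros [Hi H]; split; eauto using root_link_le.
    + intros [<- H]; split; auto using kR_le.
  - intros [|i w] [|j u] [|k v]; simpl; try tauto.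
    + intros [Hj H] [<- H']; split; eauto using root_link_R.
    + intros [<- H] [<- H']; split; eauto using kle_R.
  - intros [|i w].
    + constructor. intros [|j y] Hy; simpl in Hy; [contradiction |].
      apply glue_R_acc, kR_wf.
    + apply glue_R_acc, kR_wf.
  - intros [|i w] [|j v] p; simpl; try tauto.
    + intros [Hj H] [_ Hp]. eapply kval_mono; eauto.
    + intros [<- H] Hp. eapply kval_mono; eauto.
Defined.

Lemma glue_forces_sub a :
  forall i w, forces glue (i :: w) a <-> forces (smodel (sub subs i)) w a.
Proof.
  induction a as [p| |a IHa b IHb|a IHa b IHb|a IHa b IHb|a IHa]; intros i w; simpl.
  - tauto.
  - tauto.
  - rewrite IHa, IHb; tauto.
  - rewrite IHa, IHb; tauto.
  - split.
    + intros H v Hle Ha. apply IHb, H; [split; auto | apply IHa; auto].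
    + intros H [|j v] Hle Ha; simpl in Hle; [contradiction |].
      destruct Hle as [<- Hle]. apply IHb, H; auto. apply IHa; auto.
  - split.
    + intros H v Hr. apply IHa, H. split; auto.
    + intros H [|j v] Hr; simpl in Hr; [contradiction |].
      destruct Hr as [<- Hr]. apply IHa, H; auto.
Qed.

Lemma root_to_sub a x :
  In x subs -> forces glue [] a -> forces (smodel x) (sroot x) a.
Proof.
  intros Hx H. destruct (in_sub _ _ Hx) as [i [Hi <-]].
  apply glue_forces_sub. eapply forces_mono; [| exact H].
  simpl; split; auto using kle_refl.
Qed.

Lemma root_box_to_sub a x :
  In x subs -> sboxed x = true ->
  forces glue [] (Box a) -> forces (smodel x) (sroot x) a.
Proof.
  intros Hx Hb H. destruct (in_sub _ _ Hx) as [i [Hi <-]].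
  apply glue_forces_sub, H. simpl; split; auto.
  rewrite Hb. apply kle_refl.
Qed.

Lemma root_imp a b :
  (forces glue [] a -> forces glue [] b) ->
  (forall x, In x subs -> forces (smodel x) (sroot x) (Imp a b)) ->
  forces glue [] (Imp a b).
Proof.
  intros H H' [|i v] Hle Ha; auto.
  destruct Hle as [Hi Hle]. apply glue_forces_sub. apply glue_forces_sub in Ha.
  apply (H' (sub subs i) (nth_In _ _ Hi) v Hle Ha).
Qed.

Lemma root_box a :
  (forall x, In x subs ->
     forces (smodel x) (sroot x) (if sboxed x then a else Box a)) ->
  forces glue [] (Box a).
Proof.
  intros H [|i v] HR; [contradiction |].
  destruct HR as [Hi HR]. apply glue_forces_sub.
  specialize (H (sub subs i) (nth_In _ _ Hi)).
  destruct (sboxed (sub subs i)); simpl in HR.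
  - eapply forces_mono; eauto.
  - apply H, HR.
Qed.

End Gluing.

(* A context on which no invertible left rule (nor ⊥L) applies. *)
Record saturated (l : list form) : Prop := {
  sat_bot : ~ In Bot l;
  sat_and : forall a b, ~ In (And a b) l;
  sat_or : forall a b, ~ In (Or a b) l;
  sat_pimp : forall p a, In (Imp (Var p) a) l -> ~ In (Var p) l;
  sat_andimp : forall a b d, ~ In (Imp (And a b) d) l;
  sat_orimp : forall a b d, ~ In (Imp (Or a b) d) l }.

(* x may be glued below a root forcing l: its point forces the unboxed part
   of l, and for □g in l it forces g (if boxed) or □g. *)
Definition fits (l : list form) (x : submodel) : Prop :=
  (forall g, In g l -> ~ is_box g -> forces (smodel x) (sroot x) g) /\
  (forall g, In (Box g) l ->
     forces (smodel x) (sroot x) (if sboxed x then g else Box g)).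

Lemma fits_of_forces_all l x :
  sboxed x = false -> forces_all (smodel x) (sroot x) l -> fits l x.
Proof. intros Hb H; split; [auto |]. rewrite Hb; auto. Qed.

(* The situation of the premises of SLtR and □→L: □G is unboxed to G. *)
Lemma fits_of_unboxed l Phi G x :
  box_free Phi -> Permutation l (Phi ++ map Box G) -> sboxed x = true ->
  forces_all (smodel x) (sroot x) (Phi ++ G) -> fits l x.
Proof.
  intros Hb Hp Hx H; split; [| rewrite Hx]; intros g Hg;
    apply (Permutation_in _ Hp) in Hg; [intros Hn | ]; apply H, in_or_app.
  - left; eapply in_split_unboxed; eauto.
  - right; eapply in_split_boxed; eauto.
Qed.

Lemma fits_perm l l0 f x :
  Permutation l (f :: l0) -> ~ is_box f -> forces (smodel x) (sroot x) f ->
  fits l0 x -> fits l x.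
Proof.
  intros HP Hn Hf [H1 H2]; split; intros g Hg;
    destruct (in_perm_cons _ _ _ _ HP Hg) as [Heq | Hg']; auto.
  - subst; auto.
  - subst; contradiction Hn; exact I.
Qed.

(* The left implications whose rules are not invertible, and what a glued
   point must do to refute the root's instance of their left premise. *)
Definition hard_imp (g : form) : Prop :=
  match g with
  | Imp (Imp _ _) _ | Imp (Box _) _ => True
  | _ => False
  end.

Definition refutes_premise (g : form) (x : submodel) : Prop :=
  match g with
  | Imp (Imp a b) _ =>
      sboxed x = false /\ forces (smodel x) (sroot x) a /\ ~ forces (smodel x) (sroot x) b
  | Imp (Box a) _ => sboxed x = true /\ ~ forces (smodel x) (sroot x) a
  | _ => True
  end.

Definition covers (l : list form) (subs : list submodel) : Prop :=
  forall g, In g l -> hard_imp g -> exists x, In x subs /\ refutes_premise g x.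

Lemma covers_app l extra subs : covers l subs -> covers l (extra ++ subs).
Proof.
  intros Hc g Hg Hh. destruct (Hc g Hg Hh) as [x [Hx Q]].
  exists x; split; auto. apply in_or_app; auto.
Qed.

Lemma glue_forces_context l subs :
  saturated l -> (forall x, In x subs -> fits l x) -> covers l subs ->
  forces_all (glue l subs) [] l.
Proof.
  intros Hsat Hfit Hcov g Hg. destruct g as [p| |a b|a b|g1 g2|a].
  - split; auto. intros i Hi. apply (proj1 (Hfit _ (nth_In _ _ Hi)) (Var p) Hg).
    simpl; auto.
  - contradiction (sat_bot _ Hsat).
  - contradiction (sat_and _ Hsat a b).
  - contradiction (sat_or _ Hsat a b).
  - apply root_imp; [| intros x Hx; apply (proj1 (Hfit x Hx)); simpl; auto].
    destruct g1 as [p| |a b|a b|a b|a]; intros H1.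
    + contradiction (sat_pimp _ Hsat p g2 Hg (proj1 H1)).
    + contradiction.
    + contradiction (sat_andimp _ Hsat a b g2).
    + contradiction (sat_orimp _ Hsat a b g2).
    + destruct (Hcov _ Hg I) as [x [Hx [_ [Ha Hb]]]]. contradiction Hb.
      apply (root_to_sub _ _ _ _ Hx H1 (sroot x) (kle_refl _ _) Ha).
    + destruct (Hcov _ Hg I) as [x [Hx [Hb Ha]]]. contradiction Ha.
      eapply root_box_to_sub; eauto.
  - apply root_box. intros x Hx. apply (proj2 (Hfit x Hx)); auto.
Qed.

(* What the glued points must achieve for the root to refute the goal. *)
Definition goal_refuted (l : list form) (subs : list submodel) (c : form) : Prop :=
  match c with
  | Var p => ~ In (Var p) l
  | Bot => True
  | Or a b => (exists x, In x subs /\ ~ forces (smodel x) (sroot x) a) /\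
              (exists x, In x subs /\ ~ forces (smodel x) (sroot x) b)
  | Box a => exists x, In x subs /\ sboxed x = true /\ ~ forces (smodel x) (sroot x) a
  | _ => False
  end.

Lemma glue_refutes l c subs :
  saturated l -> (forall x, In x subs -> fits l x) -> covers l subs ->
  goal_refuted l subs c -> Refutable l c.
Proof.
  intros Hsat Hfit Hcov Hgoal. exists (glue l subs), [].
  split; [apply glue_forces_context; auto |].
  destruct c as [p| |a b|a b|a b|a]; simpl in Hgoal |- *; try tauto.
  - destruct Hgoal as [[x [Hx Ha]] [y [Hy Hb]]].
    intros [H | H]; [apply Ha | apply Hb]; eapply root_to_sub; eauto.
  - destruct Hgoal as [x [Hx [Hb Ha]]]. intro H. apply Ha.
    eapply root_box_to_sub; eauto.
Qed.

Definition refutable_below (m : nat) : Prop :=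
  forall l c, measure l c < m -> ~ G4iSLt l c -> Refutable l c.

Lemma finite_choice {A B : Type} (R : A -> Prop) (Q : B -> Prop)
  (P : A -> B -> Prop) (l : list A) :
  (forall g, In g l -> R g -> exists x, Q x /\ P g x) ->
  exists xs, (forall x, In x xs -> Q x) /\
             (forall g, In g l -> R g -> exists x, In x xs /\ P g x).
Proof.
  induction l as [|a l IH]; intros H.
  - exists []; split; [intros _ [] | intros _ []].
  - destruct IH as [xs [HQ HP]]; [intros; apply H; simpl; auto |].
    destruct (classic (R a)) as [Ra | nRa].
    + destruct (H a (or_introl eq_refl) Ra) as [x [Qx Px]].
      exists (x :: xs); split; [intros y [<- | Hy]; auto |].
      intros g [<- | Hg] Rg; [exists x; simpl; auto |].
      destruct (HP g Hg Rg) as [y [Hy Py]]; exists y; simpl; auto.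
    + exists xs; split; auto. intros g [<- | Hg] Rg; [contradiction | auto].
Qed.

(* Invertible left rules: an unprovable premise, lighter than l ⇒ c, has a
   countermodel by induction, and that model also refutes l ⇒ c.  The
   non-invertible left rules instead supply points for gluing. *)
Section Reduction.
Variables (l : list form) (c : form).
Hypothesis IH : refutable_below (measure l c).
Hypothesis unprovable : ~ G4iSLt l c.

Lemma refute_AndL a b : In (And a b) l -> Refutable l c.
Proof.
  intros H; destruct (in_perm _ _ H) as [l' HP].
  pose proof (weight_ge3 a) as Wa; pose proof (weight_ge3 b) as Wb.
  apply refutable_transfer with (a :: b :: l').
  - apply IH; [| intro P; apply unprovable; eapply AndL; eauto].
    unfold measure; rewrite (ctx_weight_perm _ _ HP); cbn [ctx_weight weight]; nia.
  - intros M w Hw. apply (forces_all_perm _ _ _ _ HP), forces_all_cons.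
    + split; apply Hw; simpl; auto.
    + intros f Hf; apply Hw; simpl; auto.
Qed.

Lemma refute_OrL a b : In (Or a b) l -> Refutable l c.
Proof.
  intros H; destruct (in_perm _ _ H) as [l' HP].
  pose proof (weight_ge3 a) as Wa; pose proof (weight_ge3 b) as Wb.
  assert (Hd : exists d, (d = a \/ d = b) /\ ~ G4iSLt (d :: l') c).
  { destruct (classic (G4iSLt (a :: l') c)) as [Pa | nPa]; [| eauto].
    exists b; split; auto. intro Pb; apply unprovable; exact (OrL _ _ _ _ _ Pa Pb HP). }
  destruct Hd as [d [Hd nPd]].
  apply refutable_transfer with (d :: l').
  - apply IH; auto. unfold measure; rewrite (ctx_weight_perm _ _ HP).
    destruct Hd; subst; cbn [ctx_weight weight]; nia.
  - intros M w Hw. apply (forces_all_perm _ _ _ _ HP), forces_all_cons.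
    + destruct Hd; subst; [left | right]; apply Hw; simpl; auto.
    + intros f Hf; apply Hw; simpl; auto.
Qed.

Lemma refute_PImpL p a : In (Imp (Var p) a) l -> In (Var p) l -> Refutable l c.
Proof.
  intros HI HV; destruct (in_perm _ _ HI) as [l1 HP1].
  destruct (in_perm_cons _ _ _ _ HP1 HV) as [Hx | HV1]; [discriminate |].
  destruct (in_perm _ _ HV1) as [l2 HP2].
  assert (HP : Permutation l (Var p :: Imp (Var p) a :: l2)).
  { eapply perm_trans; [exact HP1 |].
    eapply perm_trans; [apply perm_skip, HP2 | apply perm_swap]. }
  pose proof (weight_ge3 a) as Wa.
  apply refutable_transfer with (Var p :: a :: l2).
  - apply IH; [| intro P; apply unprovable; eapply PImpL; eauto].
    unfold measure; rewrite (ctx_weight_perm _ _ HP); cbn [ctx_weight weight]; nia.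
  - intros M w Hw. apply (forces_all_perm _ _ _ _ HP).
    apply forces_all_cons; [apply Hw; simpl; auto |].
    apply forces_all_cons; [| intros f Hf; apply Hw; simpl; auto].
    intros v Hv _. eapply forces_mono; eauto. apply Hw; simpl; auto.
Qed.

Lemma refute_AndImpL a b d : In (Imp (And a b) d) l -> Refutable l c.
Proof.
  intros H; destruct (in_perm _ _ H) as [l' HP].
  pose proof (weight_ge3 a) as Wa; pose proof (weight_ge3 b) as Wb;
    pose proof (weight_ge3 d) as Wd.
  apply refutable_transfer with (Imp a (Imp b d) :: l').
  - apply IH; [| intro P; apply unprovable; eapply AndImpL; eauto].
    unfold measure; rewrite (ctx_weight_perm _ _ HP); cbn [ctx_weight weight]; nia.
  - intros M w Hw. apply (forces_all_perm _ _ _ _ HP), forces_all_cons.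
    + intros v Hv [Ha Hb].
      apply (Hw _ (or_introl eq_refl) v Hv Ha v (kle_refl _ _) Hb).
    + intros f Hf; apply Hw; simpl; auto.
Qed.

Lemma refute_OrImpL a b d : In (Imp (Or a b) d) l -> Refutable l c.
Proof.
  intros H; destruct (in_perm _ _ H) as [l' HP].
  pose proof (weight_ge3 a) as Wa; pose proof (weight_ge3 b) as Wb;
    pose proof (weight_ge3 d) as Wd.
  apply refutable_transfer with (Imp a d :: Imp b d :: l').
  - apply IH; [| intro P; apply unprovable; eapply OrImpL; eauto].
    unfold measure; rewrite (ctx_weight_perm _ _ HP); cbn [ctx_weight weight]; nia.
  - intros M w Hw. apply (forces_all_perm _ _ _ _ HP), forces_all_cons.
    + intros v Hv [Ha | Hb]; [apply (Hw (Imp a d)) | apply (Hw (Imp b d))];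
        simpl; auto.
    + intros f Hf; apply Hw; simpl; auto.
Qed.

(* For (a → b) → d in l: either the right premise d, l' ⇒ c is unprovable,
   refuting l ⇒ c, or the left premise b → d, l' ⇒ a → b is not, and a
   countermodel of a, b → d, l' ⇒ b is a non-boxed point to glue. *)
Lemma witness_ImpImpL a b d :
  In (Imp (Imp a b) d) l -> ~ Refutable l c ->
  exists x, fits l x /\ refutes_premise (Imp (Imp a b) d) x.
Proof.
  intros H NR; destruct (in_perm _ _ H) as [l' HP].
  pose proof (weight_ge3 a) as Wa; pose proof (weight_ge3 b) as Wb;
    pose proof (weight_ge3 d) as Wd.
  assert (Wab : 9 <= weight a * weight b) by nia.
  assert (Hw : ctx_weight l = 9 * weight a * weight b * weight d + ctx_weight l').
  { rewrite (ctx_weight_perm _ _ HP). cbn [ctx_weight weight]. lia. }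
  assert (Pd : G4iSLt (d :: l') c).
  { apply NNPP; intro nPd. apply NR, refutable_transfer with (d :: l').
    - apply IH; auto. unfold measure; cbn [ctx_weight]; rewrite Hw; nia.
    - intros M w Hd. apply (forces_all_perm _ _ _ _ HP), forces_all_cons.
      + intros v Hv _. eapply forces_mono; eauto. apply Hd; simpl; auto.
      + intros f Hf; apply Hd; simpl; auto. }
  destruct (IH (a :: Imp b d :: l') b) as [M [w [H1 H2]]].
  { unfold measure; cbn [ctx_weight weight]; rewrite Hw; nia. }
  { intro P. apply unprovable. eapply ImpImpL; eauto. apply ImpR; auto. }
  exists (mkSub M w false); split.
  - apply (fits_perm _ _ _ _ HP); simpl; auto.
    + intros v Hv Hab. apply (H1 (Imp b d)); simpl; auto.
      apply Hab; [apply kle_refl |]. eapply forces_mono; eauto. apply H1; simpl; auto.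
    + apply fits_of_forces_all; auto. intros f Hf; apply H1; simpl; auto.
  - simpl; repeat split; auto. apply H1; simpl; auto.
Qed.

(* For □a → d in l: as above, with a countermodel of Φ, G, d, □a ⇒ a as a
   boxed point, where l' = Φ, □G. *)
Lemma witness_BoxImpL a d :
  In (Imp (Box a) d) l -> ~ Refutable l c ->
  exists x, fits l x /\ refutes_premise (Imp (Box a) d) x.
Proof.
  intros H NR; destruct (in_perm _ _ H) as [l' HP].
  destruct (boxes_split l') as [Phi [G [Hb Hp]]].
  pose proof (ctx_weight_unbox G) as WG; pose proof (weight_ge3 a) as Wa;
    pose proof (weight_ge3 d) as Wd.
  assert (Wad : 9 <= weight a * weight d) by nia.
  assert (Hw : ctx_weight l =
    9 * weight a * weight d + ctx_weight Phi + ctx_weight (map Box G)).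
  { rewrite (ctx_weight_perm _ _ HP); cbn [ctx_weight weight].
    rewrite (ctx_weight_perm _ _ Hp), ctx_weight_app. lia. }
  assert (HD : Permutation l (Phi ++ map Box G ++ [Imp (Box a) d])).
  { eapply perm_trans; [exact HP |]. eapply perm_trans; [apply perm_skip, Hp |].
    rewrite app_assoc. apply Permutation_cons_append. }
  assert (Pd : G4iSLt (Phi ++ map Box G ++ [d]) c).
  { apply NNPP; intro nPd.
    apply NR, refutable_transfer with (Phi ++ map Box G ++ [d]).
    - apply IH; auto. unfold measure; rewrite !ctx_weight_app, Hw; cbn [ctx_weight]; nia.
    - intros M w Hd. apply (forces_all_perm _ _ _ _ HD).
      intros f Hf; rewrite !in_app_iff in Hf; simpl in Hf.
      destruct Hf as [Hf | [Hf | [<- | []]]];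
        try (apply Hd; rewrite !in_app_iff; simpl; tauto).
      intros v Hv _. eapply forces_mono; eauto.
      apply Hd; rewrite !in_app_iff; simpl; auto. }
  destruct (IH (Phi ++ G ++ [d; Box a]) a) as [M [w [H1 H2]]].
  { unfold measure; rewrite !ctx_weight_app, Hw; cbn [ctx_weight weight]; nia. }
  { intro P. apply unprovable. eapply BoxImpL; eauto. }
  exists (mkSub M w true); split.
  - apply (fits_perm _ _ _ _ HP); simpl; auto.
    + intros v Hv _. eapply forces_mono; eauto.
      apply H1; rewrite !in_app_iff; simpl; auto.
    + apply (fits_of_unboxed _ _ _ _ Hb Hp); auto.
      intros f Hf; apply H1; apply in_app_iff in Hf; rewrite !in_app_iff; tauto.
  - simpl; auto.
Qed.

Lemma successors :
  Refutable l c \/ exists subs, (forall x, In x subs -> fits l x) /\ covers l subs.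
Proof.
  destruct (classic (Refutable l c)) as [C | NC]; [left; auto | right].
  apply finite_choice. intros g Hg Hh.
  destruct g as [| | | |[| | | |a b|a] d|]; try contradiction.
  - apply witness_ImpImpL; auto.
  - apply witness_BoxImpL; auto.
Qed.

End Reduction.

Lemma refute_AndR l a b :
  refutable_below (measure l (And a b)) -> ~ G4iSLt l (And a b) ->
  Refutable l (And a b).
Proof.
  intros IH NP. pose proof (weight_ge3 a) as Wa; pose proof (weight_ge3 b) as Wb.
  assert (Hd : exists d, (d = a \/ d = b) /\ ~ G4iSLt l d).
  { destruct (classic (G4iSLt l a)) as [Pa | nPa]; [| eauto].
    exists b; split; auto. intro Pb; apply NP, AndR; auto. }
  destruct Hd as [d [Hd nPd]].
  destruct (IH l d) as [M [w [H1 H2]]]; auto.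
  - unfold measure; destruct Hd; subst; cbn [weight]; nia.
  - exists M, w; split; auto. intros [Ha Hb]; destruct Hd; subst; auto.
Qed.

Lemma refute_ImpR l a b :
  refutable_below (measure l (Imp a b)) -> ~ G4iSLt l (Imp a b) ->
  Refutable l (Imp a b).
Proof.
  intros IH NP. pose proof (weight_ge3 a) as Wa; pose proof (weight_ge3 b) as Wb.
  destruct (IH (a :: l) b) as [M [w [H1 H2]]].
  - unfold measure; cbn [ctx_weight weight]; nia.
  - intro P; apply NP, ImpR; auto.
  - exists M, w; split; [intros f Hf; apply H1; simpl; auto |].
    intro H. apply H2, (H w (kle_refl _ _)), H1. simpl; auto.
Qed.

Lemma refute_by_glue l c extra :
  refutable_below (measure l c) -> ~ G4iSLt l c -> saturated l ->
  (forall x, In x extra -> fits l x) ->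
  (forall subs, goal_refuted l (extra ++ subs) c) -> Refutable l c.
Proof.
  intros IH NP Hsat Hextra Hgoal.
  destruct (successors l c IH NP) as [C | [subs [Hfit Hcov]]]; auto.
  apply (glue_refutes _ _ (extra ++ subs)); auto using covers_app.
  intros x Hx; apply in_app_or in Hx; destruct Hx; auto.
Qed.

(* ∨R: countermodels of both l ⇒ a and l ⇒ b are glued below a common root. *)
Lemma refute_OrR l a b :
  refutable_below (measure l (Or a b)) -> ~ G4iSLt l (Or a b) -> saturated l ->
  Refutable l (Or a b).
Proof.
  intros IH NP Hsat. pose proof (weight_ge3 a) as Wa; pose proof (weight_ge3 b) as Wb.
  destruct (IH l a) as [Ma [wa [H1a H2a]]];
    [unfold measure; cbn [weight]; nia | intro P; apply NP, OrR1, P |].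
  destruct (IH l b) as [Mb [wb [H1b H2b]]];
    [unfold measure; cbn [weight]; nia | intro P; apply NP, OrR2, P |].
  apply (refute_by_glue _ _ [mkSub Ma wa false; mkSub Mb wb false]); auto.
  - intros x [<- | [<- | []]]; apply fits_of_forces_all; auto.
  - intros subs; split; [exists (mkSub Ma wa false) | exists (mkSub Mb wb false)];
      simpl; auto.
Qed.

(* SLtR: with l = Φ, □G, a countermodel of Φ, G, □a ⇒ a is glued as a boxed
   point. *)
Lemma refute_BoxR l a :
  refutable_below (measure l (Box a)) -> ~ G4iSLt l (Box a) -> saturated l ->
  Refutable l (Box a).
Proof.
  intros IH NP Hsat. pose proof (weight_ge3 a) as Wa.
  destruct (boxes_split l) as [Phi [G [Hb Hp]]].
  pose proof (ctx_weight_unbox G) as WG.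
  destruct (IH (Phi ++ G ++ [Box a]) a) as [M [w [H1 H2]]].
  { unfold measure; rewrite (ctx_weight_perm _ _ Hp), !ctx_weight_app.
    cbn [ctx_weight weight]; nia. }
  { intro P; apply NP; eapply SLtR; eauto. }
  apply (refute_by_glue _ _ [mkSub M w true]); auto.
  - intros x [<- | []]. apply (fits_of_unboxed _ _ _ _ Hb Hp); auto.
    intros f Hf; apply H1; apply in_app_iff in Hf; rewrite !in_app_iff; tauto.
  - intros subs; exists (mkSub M w true); simpl; auto.
Qed.

Lemma refute_saturated l c :
  refutable_below (measure l c) -> ~ G4iSLt l c -> saturated l -> Refutable l c.
Proof.
  intros IH NP Hsat. destruct c as [p| |a b|a b|a b|a].
  - apply (refute_by_glue _ _ []); simpl; auto; [intros _ [] |].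
    intros _ HV; apply NP. destruct (in_perm _ _ HV) as [l' HP]. eapply IdP; eauto.
  - apply (refute_by_glue _ _ []); simpl; auto. intros _ [].
  - apply refute_AndR; auto.
  - apply refute_OrR; auto.
  - apply refute_ImpR; auto.
  - apply refute_BoxR; auto.
Qed.

Lemma unsaturated_cases l :
  ~ saturated l ->
  In Bot l \/ (exists a b, In (And a b) l) \/ (exists a b, In (Or a b) l) \/
  (exists p a, In (Imp (Var p) a) l /\ In (Var p) l) \/
  (exists a b d, In (Imp (And a b) d) l) \/ (exists a b d, In (Imp (Or a b) d) l).
Proof.
  intros H. apply NNPP; intro N. apply H.
  constructor; intros; intro; apply N; eauto 10.
Qed.

Lemma refute_step l c :
  refutable_below (measure l c) -> ~ G4iSLt l c -> Refutable l c.
Proof.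
  intros IH NP. destruct (classic (saturated l)) as [Hsat | Hunsat].
  - apply refute_saturated; auto.
  - destruct (unsaturated_cases l Hunsat) as
      [HB | [[a [b H]] | [[a [b H]] | [[p [a [H H']]] |
       [[a [b [d H]]] | [a [b [d H]]]]]]]].
    + contradiction NP. destruct (in_perm _ _ HB) as [l' HP]. eapply BotL; eauto.
    + eapply refute_AndL; eauto.
    + eapply refute_OrL; eauto.
    + eapply refute_PImpL; eauto.
    + eapply refute_AndImpL; eauto.
    + eapply refute_OrImpL; eauto.
Qed.

Theorem G4iSLt_complete l c : G4iSLt l c \/ Refutable l c.
Proof.
  assert (H : forall n l c, measure l c < n -> G4iSLt l c \/ Refutable l c).
  { induction n as [|n IHn]; intros l' c' Hm; [lia |].
    destruct (classic (G4iSLt l' c')) as [P | NP]; [left; exact P | right].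
    apply refute_step; auto. intros l'' c'' Hlt NP'.
    destruct (IHn l'' c''); [lia | contradiction | auto]. }
  apply (H (S (measure l c))); lia.
Qed.

Theorem mainTheorem3 : forall (G : form -> Prop) (a : form),
  iSLH G a ->
  exists G' : list form, (forall b, In b G' -> G b) /\ G4iSLt G' a.
Proof.
  intros G a H. destruct (iSLH_compact _ _ H) as [L [HL HH]].
  exists L; split; auto.
  destruct (G4iSLt_complete L a) as [P | [M [w [H1 H2]]]]; auto.
  contradiction H2. apply (iSLH_sound _ _ HH); auto.
Qed.
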